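(* Let $X$ be a topological space in which every open set is a union of countably many clopen sets. Assume that $C_p(X,\{0,1\})$ is an $\alpha_1$ space, and let $\mathcal{U}=\{U_n:n\in\mathbb{N}\}$ be a bijectively enumerated family of open subsets of $X$. Then the Marczewski map $\mathcal{U}:X\to P(\mathbb{N})$ is a discrete limit of a sequence of continuous functions $\Psi_m:X\to P(\mathbb{N})$.
   Context: $C_p(X,\{0,1\})$ is the set of continuous functions $X\to\{0,1\}$ with the topology of pointwise convergence. In a space $Y$, a countable set $A$ of distinct points converges to $y$ if some (equivalently every) bijective enumeration of $A$ converges to $y$; $Y$ is an $\alpha_1$ space if for each $y\in Y$ and each sequence $A_1,A_2,\dots$ of countably infinite sets each converging to $y$, there are cofinite $B_n\subseteq A_n$ such that $\bigcup_nB_n$ converges to $y$. $P(\mathbb{N})$ carries the Cantor space topology (identified with $\{0,1\}^{\mathbb{N}}$ via characteristic functions). The Marczewski map of a bijectively enumerated family $\mathcal{U}=\{U_n\}$ of subsets of $X$ is $\mathcal{U}(x)=\{n\in\mathbb{N}:x\in U_n\}$. A function $f$ on $X$ is a discrete limit of functions $f_m$ if for each $x\in X$, $f_m(x)=f(x)$ for all but finitely many $m$. *)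

From Stdlib Require Import List Arith ClassicalEpsilon.
Import ListNotations.
Set Implicit Arguments.

Record topology (X : Type) := Topology {
  is_open : (X -> Prop) -> Prop;
  open_full : is_open (fun _ => True);
  open_inter : forall U V, is_open U -> is_open V -> is_open (fun x => U x /\ V x);
  open_union : forall (I : Type) (F : I -> X -> Prop),
      (forall i, is_open (F i)) -> is_open (fun x => exists i, F i x)
}.

Definition is_closed X (T : topology X) (U : X -> Prop) : Prop :=
  is_open T (fun x => ~ U x).

Definition is_clopen X (T : topology X) (U : X -> Prop) : Prop :=
  is_open T U /\ is_closed T U.

Definition open_countable_union_clopen X (T : topology X) : Prop :=
  forall U, is_open T U ->
    exists C : nat -> X -> Prop,
      (forall n, is_clopen T (C n)) /\ (forall x, U x <-> exists n, C n x).

Definition continuous X Y (TX : topology X) (TY : topology Y) (f : X -> Y) : Prop :=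
  forall V, is_open TY V -> is_open TX (fun x => V (f x)).

Definition discrete_bool : topology bool.
Proof.
  refine (@Topology bool (fun _ => True) _ _ _); auto.
Defined.

(** Topology of pointwise convergence (initial topology of ev : Y -> (A -> bool)
    into the product {0,1}^A): W is open iff every point y of W has a basic
    neighbourhood {z | z agrees with y on a finite set F} contained in W. *)
Definition pointwise_open Y A (ev : Y -> A -> bool) (W : Y -> Prop) : Prop :=
  forall y, W y -> exists F : list A,
    forall z, (forall a, In a F -> ev z a = ev y a) -> W z.

Definition pointwise_top Y A (ev : Y -> A -> bool) : topology Y.
Proof.
  refine (@Topology Y (pointwise_open ev) _ _ _).
  - intros y _. exists nil. auto.
  - intros U V HU HV y [Uy Vy].
    destruct (HU y Uy) as [F1 H1]. destruct (HV y Vy) as [F2 H2].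
    exists (F1 ++ F2). intros z Hz. split.
    + apply H1. intros a Ha. apply Hz. apply in_or_app. auto.
    + apply H2. intros a Ha. apply Hz. apply in_or_app. auto.
  - intros I F HF y [i Hi].
    destruct (HF i y Hi) as [G HG]. exists G. intros z Hz. exists i. auto.
Defined.

(** P(N) with the Cantor space topology, identified with {0,1}^N. *)
Definition cantor_top : topology (nat -> bool) := pointwise_top (fun s : nat -> bool => s).

Definition Cp X (T : topology X) : Type :=
  { f : X -> bool | continuous T discrete_bool f }.

Definition Cp_top X (T : topology X) : topology (Cp T) :=
  pointwise_top (fun f : Cp T => proj1_sig f).

Definition seq_converges Y (T : topology Y) (s : nat -> Y) (y : Y) : Prop :=
  forall W, is_open T W -> W y -> exists N, forall n, N <= n -> W (s n).

Definition bij_enum Y (e : nat -> Y) (A : Y -> Prop) : Prop :=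
  (forall i j, e i = e j -> i = j) /\ (forall n, A (e n)) /\
  (forall a, A a -> exists n, e n = a).

(** A countably infinite set A converges to y: some bijective enumeration
    of A converges to y. *)
Definition set_converges Y (T : topology Y) (A : Y -> Prop) (y : Y) : Prop :=
  exists e, bij_enum e A /\ seq_converges T e y.

Definition cofinite_subset Y (B A : Y -> Prop) : Prop :=
  (forall a, B a -> A a) /\ exists l : list Y, forall a, A a -> ~ B a -> In a l.

Definition alpha1 Y (T : topology Y) : Prop :=
  forall (y : Y) (A : nat -> Y -> Prop),
    (forall n, set_converges T (A n) y) ->
    exists B : nat -> Y -> Prop,
      (forall n, cofinite_subset (B n) (A n)) /\
      set_converges T (fun a => exists n, B n a) y.

Definition marczewski X (U : nat -> X -> Prop) (x : X) : nat -> bool :=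
  fun n => if excluded_middle_informative (U n x) then true else false.

Definition discrete_limit X Y (f : X -> Y) (fm : nat -> X -> Y) : Prop :=
  forall x, exists N, forall m, N <= m -> fm m x = f x.

(* Write each U_n as the disjoint union of clopen layers E_n j (disjointify a countable clopen
   cover). Whenever U_n has infinitely many nonempty layers, their indicators form a countable
   set converging to 0 in C_p(X,{0,1}), since every point lies in at most one layer. By alpha_1,
   cofinitely many indicators of every such family can be merged into one sequence e_k converging
   to 0, i.e. every x lies in only finitely many e_k. Hence for each n there is M_n such that
   every nonempty layer E_n j with j >= M_n is some e_k. Let Psi_m(x) be the set of n such that
   x lies in a layer E_n j with j < M_n, or in some e_k with k < m and e_k included in U_n. Each
   coordinate is clopen, and Psi_m(x) = U(x) as soon as m exceeds the last k with x in e_k. *)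

From Stdlib Require Import List Arith Lia ClassicalEpsilon Classical IndefiniteDescription
  FunctionalExtensionality PropExtensionality Wf_nat.
Import ListNotations.

Definition nonempty {X : Type} (A : X -> Prop) : Prop := exists x, A x.

Definition infinitely_often (P : nat -> Prop) : Prop := forall N, exists j, N <= j /\ P j.

Definition disjointed {X : Type} (C : nat -> X -> Prop) (j : nat) (x : X) : Prop :=
  C j x /\ ~ (exists k, k < j /\ C k x).

Definition indicator {X : Type} (A : X -> Prop) (x : X) : bool :=
  if excluded_middle_informative (A x) then true else false.

Lemma nat_least (P : nat -> Prop) :
  (exists n, P n) -> exists n, P n /\ forall k, P k -> n <= k.
Proof.
  intros HP.
  destruct (dec_inh_nat_subset_has_unique_least_element P (fun n => classic (P n)) HP)
    as [n [[Pn Hleast] _]].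
  now exists n.
Qed.

Lemma not_infinitely_often (P : nat -> Prop) :
  ~ infinitely_often P -> exists M, forall j, M <= j -> ~ P j.
Proof.
  intros HP. apply not_all_ex_not in HP as [M HM].
  exists M. intros j Hj Pj. apply HM. now exists j.
Qed.

Lemma increasing_lt (g : nat -> nat) :
  (forall k, g k < g (S k)) -> forall i k, i < k -> g i < g k.
Proof.
  intros Hg i k Hik. induction Hik as [|k _ IH]; [apply Hg | specialize (Hg k); lia].
Qed.

Lemma increasing_inj (g : nat -> nat) :
  (forall k, g k < g (S k)) -> forall i k, g i = g k -> i = k.
Proof.
  intros Hg i k E.
  destruct (Nat.lt_trichotomy i k) as [Hik|[Hik|Hik]]; auto;
    apply (increasing_lt g Hg) in Hik; lia.
Qed.

Lemma increasing_ge_id (g : nat -> nat) : (forall k, g k < g (S k)) -> forall k, k <= g k.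
Proof. intros Hg k. induction k as [|k IH]; [lia|]. specialize (Hg k). lia. Qed.

Lemma enumerate_infinitely_often (P : nat -> Prop) :
  infinitely_often P ->
  exists g : nat -> nat, (forall k, P (g k)) /\ (forall k, g k < g (S k)) /\
    (forall j, P j -> exists k, g k = j).
Proof.
  intros HP.
  assert (Hnext : forall N, exists j, (N <= j /\ P j) /\ forall i, N <= i /\ P i -> j <= i)
    by (intro N; apply nat_least, HP).
  destruct (functional_choice _ Hnext) as [next Hnext'].
  set (g := fix g k := match k with 0 => next 0 | S k => next (S (g k)) end).
  assert (Hg : forall k, g k < g (S k)).
  { intro k. simpl. destruct (Hnext' (S (g k))) as [[? _] _]. lia. }
  exists g. split; [|split]; [intros [|k]; apply Hnext' | exact Hg |].
  (* The least i with j <= g i has g i <= j: g i is the least point of P above g (i - 1) < j. *)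
  intros j Pj.
  destruct (nat_least (fun i => j <= g i) (ex_intro _ j (increasing_ge_id g Hg j)))
    as [[|i] [Hji Hleast]].
  - exists 0. enough (g 0 <= j) by lia. apply Hnext'. split; [lia | exact Pj].
  - exists (S i).
    assert (Hi : g i < j) by (apply Nat.nle_gt; intro H; specialize (Hleast i H); lia).
    enough (g (S i) <= j) by lia. apply Hnext'. split; [exact Hi | exact Pj].
Qed.

Lemma eventually_all_in_list {A : Type} (P : nat -> A -> Prop) (l : list A) :
  (forall a, exists N, forall k, N <= k -> P k a) ->
  exists N, forall k, N <= k -> forall a, In a l -> P k a.
Proof.
  intros HP. induction l as [|a l [N IH]].
  - exists 0. intros k _ a [].
  - destruct (HP a) as [Na HNa]. exists (Nat.max Na N).
    intros k Hk b [<-|Hb]; [apply HNa | apply IH]; auto; lia.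
Qed.

Lemma indicator_true {X : Type} (A : X -> Prop) x : indicator A x = true <-> A x.
Proof.
  unfold indicator. destruct (excluded_middle_informative (A x)); split; congruence || tauto.
Qed.

Lemma indicator_false {X : Type} (A : X -> Prop) x : indicator A x = false <-> ~ A x.
Proof.
  unfold indicator. destruct (excluded_middle_informative (A x)); split; congruence || tauto.
Qed.

Lemma indicator_iff {X Y : Type} (A : X -> Prop) (B : Y -> Prop) x y :
  (A x <-> B y) -> indicator A x = indicator B y.
Proof.
  intros H. unfold indicator.
  destruct (excluded_middle_informative (A x)), (excluded_middle_informative (B y)); tauto.
Qed.

Lemma disjointed_disjoint {X : Type} (C : nat -> X -> Prop) j j' x :
  disjointed C j x -> disjointed C j' x -> j = j'.
Proof.
  intros [Cj Hj] [Cj' Hj'].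
  destruct (Nat.lt_trichotomy j j') as [Hlt|[Heq|Hlt]]; auto; exfalso; eauto.
Qed.

Lemma disjointed_cover {X : Type} (C : nat -> X -> Prop) x :
  (exists k, C k x) <-> exists j, disjointed C j x.
Proof.
  split; [|intros [j [Cj _]]; eauto].
  intros HC. destruct (nat_least (fun k => C k x) HC) as [j [Cj Hleast]].
  exists j. split; [exact Cj|]. intros [k [Hk Ck]]. specialize (Hleast k Ck). lia.
Qed.

Section Clopen.

Context {X : Type} (T : topology X).

Lemma open_ext (A B : X -> Prop) :
  (forall x, A x <-> B x) -> is_open T A -> is_open T B.
Proof.
  intros H. replace B with A; [auto|].
  apply functional_extensionality. intro x. apply propositional_extensionality, H.
Qed.

Lemma open_empty : is_open T (fun _ => False).
Proof.
  apply (open_ext (fun x => exists i : False, True)); [intro x; split; intros []; tauto|].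
  apply (open_union T (fun (_ : False) _ => True)). intros [].
Qed.

Lemma open_or (A B : X -> Prop) :
  is_open T A -> is_open T B -> is_open T (fun x => A x \/ B x).
Proof.
  intros HA HB.
  apply (open_ext (fun x => exists b : bool, (if b then A else B) x)).
  - intro x. split; [intros [[|] H]; auto | intros [H|H]; [exists true|exists false]; auto].
  - apply open_union. intros [|]; assumption.
Qed.

Lemma clopen_ext (A B : X -> Prop) :
  (forall x, A x <-> B x) -> is_clopen T A -> is_clopen T B.
Proof.
  intros H [HA HA']. split; [exact (open_ext _ _ H HA)|].
  apply (open_ext _ _ (fun x => not_iff_compat (H x)) HA').
Qed.

Lemma clopen_not (A : X -> Prop) : is_clopen T A -> is_clopen T (fun x => ~ A x).
Proof.
  intros [HA HA']. split; [exact HA'|].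
  apply (open_ext A); [intro x; tauto | exact HA].
Qed.

Lemma clopen_and (A B : X -> Prop) :
  is_clopen T A -> is_clopen T B -> is_clopen T (fun x => A x /\ B x).
Proof.
  intros [HA HA'] [HB HB']. split; [now apply open_inter|].
  apply (open_ext (fun x => ~ A x \/ ~ B x)); [intro x; tauto | now apply open_or].
Qed.

Lemma clopen_or (A B : X -> Prop) :
  is_clopen T A -> is_clopen T B -> is_clopen T (fun x => A x \/ B x).
Proof.
  intros HA HB. apply (clopen_ext (fun x => ~ (~ A x /\ ~ B x))); [intro x; tauto|].
  now apply clopen_not, clopen_and; apply clopen_not.
Qed.

Lemma clopen_empty : is_clopen T (fun _ => False).
Proof. split; [exact open_empty|]. apply (open_ext (fun _ => True)); [tauto | apply open_full]. Qed.

Lemma clopen_prop_and (P : Prop) (A : X -> Prop) :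
  is_clopen T A -> is_clopen T (fun x => P /\ A x).
Proof.
  intros HA. destruct (classic P) as [HP|HP].
  - apply (clopen_ext A); [tauto | exact HA].
  - apply (clopen_ext (fun _ => False)); [tauto | exact clopen_empty].
Qed.

Lemma clopen_bounded_union (A : nat -> X -> Prop) :
  (forall k, is_clopen T (A k)) -> forall j, is_clopen T (fun x => exists k, k < j /\ A k x).
Proof.
  intros HA j. induction j as [|j IH].
  - apply (clopen_ext (fun _ => False)); [intro x; split; [tauto | intros [k [? _]]; lia]|].
    exact clopen_empty.
  - apply (clopen_ext (fun x => A j x \/ exists k, k < j /\ A k x)); [|now apply clopen_or].
    intro x. split.
    + intros [Hx|[k [Hk Hx]]]; [exists j | exists k]; split; auto; lia.
    + intros [k [Hk Hx]]. destruct (Nat.eq_dec k j) as [->|]; [now left | right].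
      exists k. split; [lia | exact Hx].
Qed.

Lemma continuous_indicator (A : X -> Prop) :
  is_clopen T A -> continuous T discrete_bool (indicator A).
Proof.
  intros HA V _.
  apply (open_ext (fun x => (V true /\ A x) \/ (V false /\ ~ A x))).
  - intro x. unfold indicator. destruct (excluded_middle_informative (A x)); tauto.
  - apply open_or; apply clopen_prop_and; [exact HA | now apply clopen_not].
Qed.

Lemma clopen_of_continuous (f : X -> bool) :
  continuous T discrete_bool f -> is_clopen T (fun x => f x = true).
Proof.
  intros Hf. split; [apply (Hf (fun b => b = true)) | apply (Hf (fun b => b <> true))]; exact I.
Qed.

Lemma open_list_forall {A : Type} (Q : A -> X -> Prop) (l : list A) :
  (forall a, is_open T (Q a)) -> is_open T (fun x => forall a, In a l -> Q a x).
Proof.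
  intros HQ. induction l as [|a l IH].
  - apply (open_ext (fun _ => True)); [intros x; simpl; tauto | apply open_full].
  - apply (open_ext (fun x => Q a x /\ forall b, In b l -> Q b x)); [|now apply open_inter].
    intro x. simpl. split; [intros [? ?] b [<-|?]; auto | auto].
Qed.

(* The preimage of an open V is the union, over all x0 with f x0 in V and all finite F
   witnessing this, of the points agreeing with x0 on F. *)
Lemma continuous_cantor_of_clopen_coords (f : X -> nat -> bool) :
  (forall n, is_clopen T (fun x => f x n = true)) -> continuous T cantor_top f.
Proof.
  intros Hf V HV.
  set (I := { p : X * list nat |
              forall z : nat -> bool, (forall a, In a (snd p) -> z a = f (fst p) a) -> V z }).
  apply (open_ext (fun x => exists i : I,
    forall a, In a (snd (proj1_sig i)) -> f x a = f (fst (proj1_sig i)) a)).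
  - intro x. split.
    + intros [[[x0 F] HF] Hx]. exact (HF (f x) Hx).
    + intros Hx. destruct (HV (f x) Hx) as [F HF]. now exists (exist _ (x, F) HF).
  - apply open_union. intro i. apply open_list_forall. intro a.
    destruct (f (fst (proj1_sig i)) a).
    + apply (Hf a).
    + apply (open_ext (fun x => ~ f x a = true)); [|apply (Hf a)].
      intro x. destruct (f x a); split; congruence.
Qed.

End Clopen.

Definition indicatorCp {X : Type} {T : topology X} {A : X -> Prop} (HA : is_clopen T A) : Cp T :=
  exist _ (indicator A) (continuous_indicator T A HA).

Definition zeroCp {X : Type} (T : topology X) : Cp T := indicatorCp (clopen_empty T).

Lemma Cp_converges_zero_pointwise {X : Type} (T : topology X) (e : nat -> Cp T) :
  seq_converges (Cp_top T) e (zeroCp T) ->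
  forall x, exists N, forall k, N <= k -> proj1_sig (e k) x = false.
Proof.
  intros He x. apply (He (fun f : Cp T => proj1_sig f x = false)).
  - intros f Hf. exists [x]. intros g Hg. rewrite (Hg x (or_introl eq_refl)). exact Hf.
  - now apply indicator_false.
Qed.

Section Pieces.

Context {X : Type} (T : topology X) (E : nat -> X -> Prop) (HE : forall j, is_clopen T (E j)).
Hypothesis E_disjoint : forall j j' x, E j x -> E j' x -> j = j'.

Definition pieces (f : Cp T) : Prop := exists j, nonempty (E j) /\ f = indicatorCp (HE j).

Lemma indicatorCp_inj j j' :
  nonempty (E j) -> indicatorCp (HE j) = indicatorCp (HE j') -> j = j'.
Proof.
  intros [x Ex] Heq. apply (f_equal (fun f => proj1_sig f x)) in Heq. simpl in Heq.
  apply (E_disjoint j j' x Ex), indicator_true. rewrite <- Heq. now apply indicator_true.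
Qed.

(* A point lies in at most one E j, and the indices g k run off to infinity. *)
Lemma pieces_converge :
  infinitely_often (fun j => nonempty (E j)) -> set_converges (Cp_top T) pieces (zeroCp T).
Proof.
  intros Hinf. destruct (enumerate_infinitely_often _ Hinf) as [g [Pg [Hg Hsurj]]].
  exists (fun k => indicatorCp (HE (g k))). split; [split; [|split]|].
  - intros i k Heq. apply (increasing_inj g Hg), (indicatorCp_inj _ _ (Pg i) Heq).
  - intro k. now exists (g k).
  - intros f [j [Hj ->]]. destruct (Hsurj j Hj) as [k <-]. now exists k.
  - intros W HW HW0. destruct (HW (zeroCp T) HW0) as [F HF].
    destruct (eventually_all_in_list (fun k a => ~ E (g k) a) F) as [N HN].
    + intro a. destruct (classic (exists j, E j a)) as [[j Ej]|Hno].
      * exists (S j). intros k Hk Ea. pose proof (E_disjoint _ _ _ Ej Ea).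
        pose proof (increasing_ge_id g Hg k). lia.
      * exists 0. intros k _ Ea. apply Hno. eauto.
    + exists N. intros k Hk. apply HF. intros a Ha. simpl.
      rewrite (proj2 (indicator_false _ _) (HN k Hk a Ha)).
      symmetry. now apply indicator_false.
Qed.

Lemma cofinite_pieces_eventually (B : Cp T -> Prop) :
  cofinite_subset B pieces ->
  exists M, forall j, M <= j -> nonempty (E j) -> B (indicatorCp (HE j)).
Proof.
  intros [_ [l Hl]].
  destruct (eventually_all_in_list
    (fun M f => forall j, nonempty (E j) -> f = indicatorCp (HE j) -> j < M) l) as [M HM].
  - intro f. destruct (classic (pieces f)) as [[j0 [Hj0 ->]]|Hf].
    + exists (S j0). intros M HM j Hj Heq. apply indicatorCp_inj in Heq; [lia | exact Hj0].
    + exists 0. intros M _ j Hj ->. exfalso. apply Hf. now exists j.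
  - exists M. intros j Hj Hne. apply NNPP. intros HB.
    assert (Hpiece : pieces (indicatorCp (HE j))) by now exists j.
    specialize (HM M (le_n M) _ (Hl _ Hpiece HB) j Hne eq_refl). lia.
Qed.

End Pieces.

(* When some family E n0 has infinitely many nonempty members, the families with only finitely
   many are replaced by E n0, so that alpha_1 is applied to a sequence of convergent sets. *)
Lemma alpha1_common_enumeration {X : Type} (T : topology X) (E : nat -> nat -> X -> Prop)
  (HE : forall n j, is_clopen T (E n j))
  (E_disjoint : forall n j j' x, E n j x -> E n j' x -> j = j') :
  alpha1 (Cp_top T) ->
  exists e : nat -> X -> Prop, (forall k, is_clopen T (e k)) /\
    (forall x, exists N, forall k, N <= k -> ~ e k x) /\
    (forall n, exists M, forall j, M <= j -> nonempty (E n j) ->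
       exists k, forall y, e k y <-> E n j y).
Proof.
  intros Halpha.
  set (Inf := fun n => infinitely_often (fun j => nonempty (E n j))).
  assert (Hfin : forall n, ~ Inf n -> exists M, forall j, M <= j -> ~ nonempty (E n j))
    by (intros n; apply not_infinitely_often).
  destruct (classic (exists n0, Inf n0)) as [[n0 Hn0]|Hnone].
  2:{ exists (fun _ _ => False). split; [|split].
      - intro k. apply clopen_empty.
      - intro x. exists 0. auto.
      - intro n. destruct (Hfin n (fun Hn => Hnone (ex_intro _ n Hn))) as [M HM].
        exists M. intros j Hj Hne. now destruct (HM j Hj Hne). }
  set (h := fun n => if excluded_middle_informative (Inf n) then n else n0).
  assert (Hh : forall n, Inf (h n))
    by (intro n; unfold h; destruct (excluded_middle_informative (Inf n)); auto).
  destruct (Halpha (zeroCp T) (fun n => pieces T (E (h n)) (HE (h n)))) as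
    [B [HB [ee [[_ [_ Hee]] Hconv]]]].
  { intro n. apply pieces_converge; [apply E_disjoint | apply Hh]. }
  exists (fun k y => proj1_sig (ee k) y = true). split; [|split].
  - intro k. apply clopen_of_continuous, (proj2_sig (ee k)).
  - intro x. destruct (Cp_converges_zero_pointwise T ee Hconv x) as [N HN].
    exists N. intros k Hk. rewrite (HN k Hk). discriminate.
  - intro n. destruct (classic (Inf n)) as [Hn|Hn].
    + assert (hn : h n = n) by (unfold h; now destruct (excluded_middle_informative (Inf n))).
      destruct (cofinite_pieces_eventually T _ _ (E_disjoint (h n)) (B n) (HB n)) as [M HM].
      rewrite hn in HM. exists M. intros j Hj Hne.
      destruct (Hee _ (ex_intro _ n (HM j Hj Hne))) as [k Hk].
      exists k. intro y. rewrite Hk. apply indicator_true.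
    + destruct (Hfin n Hn) as [M HM].
      exists M. intros j Hj Hne. now destruct (HM j Hj Hne).
Qed.

Lemma marczewski_discrete_limit {X : Type} (T : topology X) (U : nat -> X -> Prop)
  (E : nat -> nat -> X -> Prop) (HE : forall n j, is_clopen T (E n j))
  (E_cover : forall n x, U n x <-> exists j, E n j x)
  (e : nat -> X -> Prop) (He : forall k, is_clopen T (e k))
  (e_finite : forall x, exists N, forall k, N <= k -> ~ e k x)
  (e_enumerates : forall n, exists M, forall j, M <= j -> nonempty (E n j) ->
     exists k, forall y, e k y <-> E n j y) :
  exists Psi : nat -> X -> (nat -> bool),
    (forall m, continuous T cantor_top (Psi m)) /\ discrete_limit (marczewski U) Psi.
Proof.
  destruct (functional_choice _ e_enumerates) as [M HM].
  set (Psi_set := fun m n x => (exists j, j < M n /\ E n j x) \/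
                               exists k, k < m /\ ((forall z, e k z -> U n z) /\ e k x)).
  exists (fun m x n => indicator (Psi_set m n) x). split.
  - intro m. apply continuous_cantor_of_clopen_coords. intro n.
    apply (clopen_ext T (Psi_set m n)); [intro x; symmetry; apply indicator_true|].
    apply clopen_or; apply clopen_bounded_union; [apply HE|].
    intro k. apply clopen_prop_and, He.
  - intro x. destruct (e_finite x) as [N HN]. exists N. intros m Hm.
    apply functional_extensionality. intro n. apply indicator_iff. split.
    + intros [[j [_ Ej]]|[k [_ [HkU ek]]]]; [apply E_cover; eauto | auto].
    + intros Ux. apply E_cover in Ux as [j Ej].
      destruct (Nat.lt_ge_cases j (M n)) as [Hj|Hj]; [left; eauto|right].
      destruct (HM n j Hj (ex_intro _ x Ej)) as [k Hk].
      exists k. split; [|split].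
      * destruct (Nat.lt_ge_cases k N) as [Hk'|Hk']; [lia|].
        exfalso. apply (HN k Hk'), Hk, Ej.
      * intros z ez. apply E_cover. exists j. now apply Hk.
      * now apply Hk.
Qed.

Theorem mainTheorem5 (X : Type) (T : topology X)
  (HX : open_countable_union_clopen T)
  (Halpha : alpha1 (Cp_top T))
  (U : nat -> X -> Prop)
  (Uopen : forall n, is_open T (U n))
  (Uinj : forall i j, U i = U j -> i = j) :
  exists Psi : nat -> X -> (nat -> bool),
    (forall m, continuous T cantor_top (Psi m)) /\
    discrete_limit (marczewski U) Psi.
Proof.
  destruct (functional_choice _ (fun n => HX (U n) (Uopen n))) as [C HC].
  set (E := fun n => disjointed (C n)).
  assert (HE : forall n j, is_clopen T (E n j)).
  { intros n j. apply clopen_and; [apply HC | apply clopen_not, clopen_bounded_union, HC]. }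
  destruct (alpha1_common_enumeration T E HE (fun n => disjointed_disjoint (C n)) Halpha)
    as [e [He [e_finite e_enumerates]]].
  apply (marczewski_discrete_limit T U E HE) with e; try assumption.
  intros n x. rewrite (proj2 (HC n) x). apply disjointed_cover.
Qed.
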